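(* Consider the discrete-time system $x_{k+1}=f(x_k,u_k,w_k)$, $y_k=h(x_k,v_k)$ with $x_k\in\mathbb{X}\subset\mathbb{R}^n$, $u_k\in\mathbb{U}\subseteq\mathbb{R}^m$, $w_k\in\mathbb{R}^q$, $v_k\in\mathbb{V}\subset\mathbb{R}^r$, $y_k\in\mathbb{Y}\subset\mathbb{R}^p$, $f,h$ continuously differentiable, $\mathbb{Z}:=\mathbb{X}\times\mathbb{U}\times\mathbb{R}^q\times\mathbb{V}\times\mathbb{Y}$. Assume $\mathbb{X},\mathbb{V},\mathbb{Y}$ are compact. Assume there is a diffeomorphism $T=(T_\flat,T_\sharp):\mathbb{R}^n\to\mathbb{R}^{n_\flat+n_\sharp}$ and a continuously differentiable $\psi:\mathbb{R}^p\times\mathbb{R}^{n_\sharp}\times\mathbb{R}^r\to\mathbb{R}^{n_\flat}$ such that, with $z=T(x)=(z^\flat,z^\sharp)$, $f_\sharp(z^\sharp,z^\flat,u,w):=T_\sharp(f(T^{-1}(z),u,w))$ and $h_T(z^\sharp,z^\flat,v):=h(T^{-1}(z),v)$, one has $z^\flat=\psi(y,z^\sharp,v)$ whenever $y=h_T(z^\sharp,z^\flat,v)$, and $\partial f_\sharp^i/\partial w\equiv0$ for all $i\in\{1,\dots,n_\sharp\}$. Define the reduced-order system $$z^\sharp_{k+1}=\hat{f}_\sharp(z^\sharp_k,\gamma_k,u_k,v_k):=f_\sharp\big(z^\sharp_k,\psi(\gamma_k,z^\sharp_k,v_k),u_k,w_k\big),\qquad y_k=\hat{h}_T(z^\sharp_k,\gamma_k,v_k):=h_T\big(z^\sharp_k,\psi(\gamma_k,z^\sharp_k,v_k),v_k\big),$$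 with fictitious input $\gamma_k\in\mathbb{R}^p$ (the right-hand side does not depend on $w_k$). Let $\overline{\mathbb{X}}:=T(\mathbb{X})$, $\overline{\mathbb{X}}_\sharp$ its projection onto the $z^\sharp$-coordinates and $\mathbb{Z}_\sharp:=\overline{\mathbb{X}}_\sharp\times\mathbb{Y}\times\mathbb{U}\times\mathbb{V}\times\mathbb{Y}$. If there exist $\beta\in\mathcal{K}_\infty$, $\beta_0\in\mathcal{KL}$ and summable $\mathcal{KL}$-functions $\beta_v,\beta_y,\beta_\gamma$ such that $$\beta(\|z^\sharp_k-\widetilde{z}^\sharp_k\|)\le\sum_{i=1}^k\beta_v(\|v_{k-i}-\widetilde{v}_{k-i}\|,i)+\sum_{i=1}^k\big(\beta_y(\|y_{k-i}-\widetilde{y}_{k-i}\|,i)+\beta_\gamma(\|\gamma_{k-i}-\widetilde{\gamma}_{k-i}\|,i)\big)+\beta_0(\|z^\sharp_0-\widetilde{z}^\sharp_0\|,k)$$ for all $k\ge0$ and any $(\boldsymbol{z}^\sharp,\boldsymbol{\gamma},\boldsymbol{u},\boldsymbol{v},\boldsymbol{y}),(\widetilde{\boldsymbol{z}}^\sharp,\widetilde{\boldsymbol{\gamma}},\boldsymbol{u},\widetilde{\boldsymbol{v}},\widetilde{\boldsymbol{y}})\in\mathbb{Z}_\sharp^\infty$ satisfying the reduced-order system, then the original system is strongly nonlinearly detectable.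
   Context: $\mathcal{K}$, $\mathcal{K}_\infty$, $\mathcal{KL}$ are the usual comparison function classes; a $\mathcal{KL}$-function $\beta$ is summable if there is $\alpha\in\mathcal{K}$ with $\sum_{k\ge0}\beta(r,k)\le\alpha(r)$ for all $r\ge0$. A solution of the original system is a sequence in $\mathbb{Z}^\infty$ satisfying its equations. The original system is strongly nonlinearly detectable if there exist $\alpha\in\mathcal{K}_\infty$, $\alpha_0\in\mathcal{KL}$ and summable $\alpha_v,\alpha_y\in\mathcal{KL}$ such that $\alpha(\|x_k-\widetilde{x}_k\|)\le\alpha_0(\|x_0-\widetilde{x}_0\|,k)+\sum_{i=0}^k(\alpha_v(\|v_{k-i}-\widetilde{v}_{k-i}\|,i)+\alpha_y(\|y_{k-i}-\widetilde{y}_{k-i}\|,i))$ for all $k\ge0$ and all pairs of solutions $(\boldsymbol{x},\boldsymbol{u},\boldsymbol{w},\boldsymbol{v},\boldsymbol{y}),(\widetilde{\boldsymbol{x}},\boldsymbol{u},\widetilde{\boldsymbol{w}},\widetilde{\boldsymbol{v}},\widetilde{\boldsymbol{y}})\in\mathbb{Z}^\infty$. *)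

(* R : realType, vectors are row vectors 'rV[R]_n
   with the library's (sup-)norm `|.|, products of normed spaces for
   multi-argument maps. *)
From mathcomp Require Import all_boot all_order all_algebra.
From mathcomp Require Import all_classical all_reals all_analysis.
Import numFieldNormedType.Exports.
Set Implicit Arguments. Unset Strict Implicit. Unset Printing Implicit Defensive.
Import Order.TTheory GRing.Theory Num.Theory.
Local Open Scope ring_scope.
Local Open Scope classical_set_scope.

Section Defs.
Variable R : realType.

(** Continuously differentiable: differentiable everywhere, and every
    directional derivative x |-> f'(x) v is continuous (for finite-dimensional
    spaces this is continuity of the derivative x |-> Df(x)). *)
Definition C1 {V W : normedModType R} (f : V -> W) : Prop :=
  (forall x, differentiable f x) /\ (forall v, continuous ('D_v f)).

Definition diffeo {V W : normedModType R} (T : V -> W) (Tinv : W -> V) : Prop :=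
  cancel T Tinv /\ cancel Tinv T /\ C1 T /\ C1 Tinv.

Definition classK (a : R -> R) : Prop :=
  {within [set x : R | 0 <= x], continuous a} /\ a 0 = 0 /\
  (forall s t, 0 <= s -> s < t -> a s < a t).

Definition classKinf (a : R -> R) : Prop :=
  classK a /\ (forall M : R, exists s, 0 <= s /\ M < a s).

Definition classKL (b : R -> R -> R) : Prop :=
  (forall t, 0 <= t -> classK (fun s => b s t)) /\
  (forall s, 0 <= s ->
     (forall t1 t2, 0 <= t1 -> t1 <= t2 -> b s t2 <= b s t1) /\
     (b s t @[t --> +oo] --> 0)).

(** Summable KL function: sum_{k>=0} b(r,k) <= a(r) for some a in K
    (terms are nonnegative, so this is stated via the partial sums). *)
Definition summableKL (b : R -> R -> R) : Prop :=
  classKL b /\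
  exists a, classK a /\
    forall s, 0 <= s -> forall N : nat, \sum_(0 <= k < N) b s k%:R <= a s.

Variables (n m q r p nb ns : nat).

Definition orig_sol (X : set 'rV[R]_n) (U : set 'rV[R]_m) (V : set 'rV[R]_r)
  (Y : set 'rV[R]_p) (f : 'rV[R]_n -> 'rV[R]_m -> 'rV[R]_q -> 'rV[R]_n)
  (h : 'rV[R]_n -> 'rV[R]_r -> 'rV[R]_p)
  (x : nat -> 'rV[R]_n) (u : nat -> 'rV[R]_m) (w : nat -> 'rV[R]_q)
  (v : nat -> 'rV[R]_r) (y : nat -> 'rV[R]_p) : Prop :=
  forall k, X (x k) /\ U (u k) /\ V (v k) /\ Y (y k) /\
    x k.+1 = f (x k) (u k) (w k) /\ y k = h (x k) (v k).

Definition strongly_nl_detectable (X : set 'rV[R]_n) (U : set 'rV[R]_m)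
  (V : set 'rV[R]_r) (Y : set 'rV[R]_p)
  (f : 'rV[R]_n -> 'rV[R]_m -> 'rV[R]_q -> 'rV[R]_n)
  (h : 'rV[R]_n -> 'rV[R]_r -> 'rV[R]_p) : Prop :=
  exists (a : R -> R) (a0 av ay : R -> R -> R),
    classKinf a /\ classKL a0 /\ summableKL av /\ summableKL ay /\
    forall x u w v y xt wt vt yt,
      orig_sol X U V Y f h x u w v y ->
      orig_sol X U V Y f h xt u wt vt yt ->
      forall k : nat,
        a `|x k - xt k| <=
          a0 `|x 0%N - xt 0%N| k%:R +
          \sum_(0 <= i < k.+1)
             (av `|v (k - i)%N - vt (k - i)%N| i%:R +
              ay `|y (k - i)%N - yt (k - i)%N| i%:R).

(** Transformed dynamics. z = T x = (z_flat, z_sharp) = row_mx zb zs. *)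
Definition f_sharp (f : 'rV[R]_n -> 'rV[R]_m -> 'rV[R]_q -> 'rV[R]_n)
  (T : 'rV[R]_n -> 'rV[R]_(nb + ns)) (Tinv : 'rV[R]_(nb + ns) -> 'rV[R]_n)
  (zs : 'rV[R]_ns) (zb : 'rV[R]_nb) (u : 'rV[R]_m) (w : 'rV[R]_q) : 'rV[R]_ns :=
  rsubmx (T (f (Tinv (row_mx zb zs)) u w)).

Definition h_T (h : 'rV[R]_n -> 'rV[R]_r -> 'rV[R]_p)
  (Tinv : 'rV[R]_(nb + ns) -> 'rV[R]_n)
  (zs : 'rV[R]_ns) (zb : 'rV[R]_nb) (v : 'rV[R]_r) : 'rV[R]_p :=
  h (Tinv (row_mx zb zs)) v.

(** Reduced-order system; its right-hand side does not depend on w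
    (by hypothesis), so w is fixed to 0 here. *)
Definition f_hat f T Tinv (psi : 'rV[R]_p -> 'rV[R]_ns -> 'rV[R]_r -> 'rV[R]_nb)
  (zs : 'rV[R]_ns) (g : 'rV[R]_p) (u : 'rV[R]_m) (v : 'rV[R]_r) : 'rV[R]_ns :=
  f_sharp f T Tinv zs (psi g zs v) u 0.

Definition h_hat h Tinv (psi : 'rV[R]_p -> 'rV[R]_ns -> 'rV[R]_r -> 'rV[R]_nb)
  (zs : 'rV[R]_ns) (g : 'rV[R]_p) (v : 'rV[R]_r) : 'rV[R]_p :=
  h_T h Tinv zs (psi g zs v) v.

Definition Xbar_sharp (X : set 'rV[R]_n) (T : 'rV[R]_n -> 'rV[R]_(nb + ns))
  : set 'rV[R]_ns := [set rsubmx (T x) | x in X].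

Definition red_sol X U V Y f h T Tinv psi
  (zs : nat -> 'rV[R]_ns) (g : nat -> 'rV[R]_p) (u : nat -> 'rV[R]_m)
  (v : nat -> 'rV[R]_r) (y : nat -> 'rV[R]_p) : Prop :=
  forall k, Xbar_sharp X T (zs k) /\ Y (g k) /\ U (u k) /\ V (v k) /\ Y (y k) /\
    zs k.+1 = f_hat f T Tinv psi (zs k) (g k) (u k) (v k) /\
    y k = h_hat h Tinv psi (zs k) (g k) (v k).

Definition reduced_detectable X U V Y f h T Tinv psi : Prop :=
  exists (b : R -> R) (b0 bv by_ bg : R -> R -> R),
    classKinf b /\ classKL b0 /\ summableKL bv /\ summableKL by_ /\
    summableKL bg /\
    forall zs g u v y zst gt vt yt,
      red_sol X U V Y f h T Tinv psi zs g u v y ->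
      red_sol X U V Y f h T Tinv psi zst gt u vt yt ->
      forall k : nat,
        b `|zs k - zst k| <=
          \sum_(1 <= i < k.+1) bv `|v (k - i)%N - vt (k - i)%N| i%:R +
          \sum_(1 <= i < k.+1)
             (by_ `|y (k - i)%N - yt (k - i)%N| i%:R +
              bg `|g (k - i)%N - gt (k - i)%N| i%:R) +
          b0 `|zs 0%N - zst 0%N| k%:R.

End Defs.

(* Along a solution of the original system, z_sharp = T_sharp(x) together with
   the fictitious input gamma = y solves the reduced-order system: f_sharp does
   not depend on w, and z_flat = psi(y, z_sharp, v) recovers the rest of T(x).
   The same reconstruction shows that x is determined by (z_sharp, y, v), so by
   compactness of X x V there is a K_oo function alpha with
     alpha |x - x'| <= beta |dz_sharp| + beta |dy| + beta |dv|,
   while |dz_sharp| is bounded by a class-K modulus of continuity of T_sharp on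
   X.  Inserting the reduced-order estimate for beta |dz_sharp_k| gives the
   bound; the current-time terms beta |dy_k| and beta |dv_k| are absorbed by
   adding beta(s) rho(t) to the summable KL functions, where rho(0) = 1 and
   rho is summable. *)

From mathcomp Require Import all_boot all_order all_algebra.
From mathcomp Require Import all_classical all_reals all_analysis.
From mathcomp Require Import ring lra.
Import numFieldNormedType.Exports.
Import Order.TTheory GRing.Theory Num.Theory.
Set Implicit Arguments. Unset Strict Implicit.
Local Open Scope ring_scope.
Local Open Scope classical_set_scope.

Section ComparisonFunctions.
Variable R : realType.
Implicit Types (a k : R -> R) (b : R -> R -> R).

Lemma classK_le a s t : classK a -> 0 <= s -> s <= t -> a s <= a t.
Proof.
move=> [_ [_ a_lt]] s0; rewrite le_eqVlt => /predU1P[-> // | st].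
exact/ltW/a_lt.
Qed.

Lemma classK_ge0 a s : classK a -> 0 <= s -> 0 <= a s.
Proof. by move=> Ka s0; rewrite -Ka.2.1; exact: classK_le. Qed.

Lemma classKL_ge0 b s t : classKL b -> 0 <= s -> 0 <= t -> 0 <= b s t.
Proof. by move=> [Kb _] s0 t0; exact: classK_ge0 (Kb t t0) s0. Qed.

Lemma within_nonneg_comp (f g : R -> R) :
  {within [set x | 0 <= x], continuous g} -> (forall s, 0 <= s -> 0 <= g s) ->
  {within [set x | 0 <= x], continuous f} ->
  {within [set x | 0 <= x], continuous (f \o g)}.
Proof.
move=> /subspace_continuousP cg g0 /subspace_continuousP cf.
apply/subspace_continuousP => x x0; apply: cvg_comp (cf _ (g0 _ x0)) => P /= gP.
have := cg x x0 _ gP; rewrite !nbhs_simpl /within /=.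
by apply: filterS => y gyP y0; apply: gyP (g0 _ y0).
Qed.

Lemma classK_comp a k : classK a -> classK k -> classK (a \o k).
Proof.
move=> Ka Kk; have [ca [a0 a_lt]] := Ka; have [ck [k0 k_lt]] := Kk.
split; first by apply: within_nonneg_comp => // s; exact: classK_ge0.
split; first by rewrite /= k0.
by move=> s t s0 st /=; apply: a_lt (k_lt _ _ s0 st); exact: classK_ge0.
Qed.

Lemma classKL_comp b k : classKL b -> classK k -> classKL (fun s t => b (k s) t).
Proof.
move=> [Kb Lb] Kk; split => [t t0 | s s0]; first exact: classK_comp (Kb t t0) Kk.
exact/Lb/classK_ge0.
Qed.

Lemma within_nonnegD (f g : R -> R) :
  {within [set x | 0 <= x], continuous f} -> {within [set x | 0 <= x], continuous g} ->
  {within [set x | 0 <= x], continuous (f \+ g)}.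
Proof.
move=> /subspace_continuousP cf /subspace_continuousP cg.
by apply/subspace_continuousP => x x0; apply: cvgD; [exact: cf | exact: cg].
Qed.

Lemma classK_add a k : classK a -> classK k -> classK (a \+ k).
Proof.
move=> [ca [a0 a_lt]] [ck [k0 k_lt]]; split; first exact: within_nonnegD.
split; first by rewrite /= a0 k0 addr0.
by move=> s t s0 st; apply: ltrD; [exact: a_lt | exact: k_lt].
Qed.

Lemma classKL_add b b' : classKL b -> classKL b' -> classKL (fun s t => b s t + b' s t).
Proof.
move=> [Kb Lb] [Kb' Lb']; split => [t t0 | s s0].
  exact: classK_add (Kb t t0) (Kb' t t0).
have [b_le b_cvg] := Lb s s0; have [b'_le b'_cvg] := Lb' s s0.
split; first by move=> t1 t2 t10 t12; apply: lerD; [exact: b_le | exact: b'_le].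
by rewrite -[0]addr0; apply: cvgD.
Qed.

Lemma summableKL_add b b' :
  summableKL b -> summableKL b' -> summableKL (fun s t => b s t + b' s t).
Proof.
move=> [KLb [a [Ka Ha]]] [KLb' [a' [Ka' Ha']]]; split; first exact: classKL_add.
exists (a \+ a'); split; first exact: classK_add.
by move=> s s0 N; rewrite big_split; apply: lerD; [exact: Ha | exact: Ha'].
Qed.

Lemma classK_mulr k c : 0 < c -> classK k -> classK (fun s => k s * c).
Proof.
move=> c0 [ck [k0 k_lt]]; split.
  move/subspace_continuousP : ck => ck; apply/subspace_continuousP => x x0.
  by apply: cvgMr_tmp; exact: ck.
split; first by rewrite k0 mul0r.
by move=> s t s0 st; rewrite ltr_pM2r ?k_lt.
Qed.

Section ProductKL.
Variables (rho : R -> R) (c : R).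
Hypothesis rho_gt0 : forall t, 0 <= t -> 0 < rho t.
Hypothesis rho_le : forall t1 t2, 0 <= t1 -> t1 <= t2 -> rho t2 <= rho t1.
Hypothesis rho_cvg0 : rho t @[t --> +oo] --> 0.
Hypothesis rho_sum : forall N : nat, \sum_(0 <= i < N) rho i%:R <= c.

Lemma classKL_mulr k : classK k -> classKL (fun s t => k s * rho t).
Proof.
move=> Kk; split => [t t0 | s s0]; first exact: classK_mulr (rho_gt0 t0) Kk.
have k_ge0 := classK_ge0 Kk s0.
split; first by move=> t1 t2 t10 t12; rewrite ler_wpM2l ?rho_le.
by rewrite -(mulr0 (k s)); apply: cvgMl_tmp.
Qed.

Lemma summableKL_mulr k : classK k -> summableKL (fun s t => k s * rho t).
Proof.
move=> Kk; split; first exact: classKL_mulr.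
have c_gt0 : 0 < c.
  by apply: lt_le_trans (rho_sum 1); rewrite big_nat1; apply: rho_gt0.
exists (fun s => k s * c); split; first exact: classK_mulr.
by move=> s s0 N; rewrite -mulr_sumr ler_wpM2l ?(classK_ge0 Kk).
Qed.

End ProductKL.

(* Telescopes: [decay k = 2 / (k + 1) - 2 / (k + 2)]. *)
Definition decay (t : R) : R := 2 / ((1 + t) * (2 + t)).

Lemma decay0 : decay 0 = 1.
Proof. by rewrite /decay !addr0 mul1r divff. Qed.

Lemma decay_gt0 t : 0 <= t -> 0 < decay t.
Proof. by move=> t0; rewrite /decay divr_gt0 // mulr_gt0 //; lra. Qed.

Lemma decay_le t1 t2 : 0 <= t1 -> t1 <= t2 -> decay t2 <= decay t1.
Proof.
move=> t10 t12; rewrite /decay ler_pdivrMr ?mulr_gt0 //; try lra.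
rewrite mulrAC ler_pdivlMr ?mulr_gt0 //; try lra.
by rewrite ler_pM2l //; apply: ler_pM; lra.
Qed.

Lemma cvg_decay : decay t @[t --> +oo] --> 0.
Proof.
apply/cvgrPdist_lt => e e0; near=> t.
have t0 : 0 < t by near: t; apply: nbhs_pinfty_gt; exact: num_real.
have te : 2 / e < t by near: t; apply: nbhs_pinfty_gt; exact: num_real.
rewrite sub0r normrN gtr0_norm ?decay_gt0 ?ltW //.
rewrite /decay ltr_pdivrMr ?mulr_gt0 //; try lra.
rewrite ltr_pdivrMr // in te.
by apply: lt_le_trans te _; rewrite mulrC ler_wpM2l ?ltW //; nra.
Unshelve. all: by end_near. Qed.

Lemma sum_decay_le (N : nat) : \sum_(0 <= i < N) decay i%:R <= 2.
Proof.
rewrite (@telescope_sumr_eq _ _ _ (fun i => - (2 / i.+1%:R))) // => [|i _].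
  by rewrite divr1 opprK addrC gerDl oppr_le0 divr_ge0.
rewrite /decay -!natr1; field.
by rewrite -addrA !lt0r_neq0 //; lra.
Qed.

Lemma summableKL_add_decay b k : summableKL b -> classK k ->
  summableKL (fun s t => b s t + k s * decay t).
Proof.
move=> Sb Kk; apply: summableKL_add Sb _.
by have := summableKL_mulr decay_gt0 decay_le cvg_decay sum_decay_le Kk.
Qed.

End ComparisonFunctions.

Section LowerEnvelope.
Variables (R : realType) (A : set (R * R)).
Hypothesis A0 : A !=set0.
Hypothesis A_ge0 : forall cd, A cd -> 0 <= cd.1.

(* [cd] is a (cost, position) pair. *)
Definition lower_envelope (s : R) : R :=
  inf [set cd.1 + Num.max 0 (s - cd.2) | cd in A].

Let has_lbound_envelope s :
  has_lbound [set cd.1 + Num.max 0 (s - cd.2) | cd in A].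
Proof.
exists 0 => _ [cd Acd <-]; rewrite addr_ge0 ?A_ge0 //.
by rewrite le_max lexx.
Qed.

Lemma lower_envelope_le cd s :
  A cd -> lower_envelope s <= cd.1 + Num.max 0 (s - cd.2).
Proof. by move=> Acd; apply: (ge_inf (has_lbound_envelope s)); exists cd. Qed.

Lemma lower_envelope_ge x s :
  (forall cd, A cd -> x <= cd.1 + Num.max 0 (s - cd.2)) -> x <= lower_envelope s.
Proof.
move=> Hx; apply: lb_le_inf => [|_ [cd Acd <-]]; last exact: Hx.
by have [cd Acd] := A0; exists (cd.1 + Num.max 0 (s - cd.2)), cd.
Qed.

Lemma lower_envelope_ge0 s : 0 <= lower_envelope s.
Proof.
apply: lower_envelope_ge => cd Acd; rewrite addr_ge0 ?A_ge0 //.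
by rewrite le_max lexx.
Qed.

Lemma lower_envelope_nondecreasing s t : s <= t -> lower_envelope s <= lower_envelope t.
Proof.
move=> st; apply: lower_envelope_ge => cd Acd.
apply: le_trans (lower_envelope_le s Acd) _; rewrite lerD2l.
by rewrite ge_max le_max lexx /= le_max lerD2r st orbT.
Qed.

Lemma lower_envelope_lipschitz s t :
  lower_envelope t <= lower_envelope s + `|t - s|.
Proof.
rewrite -lerBlDr; apply: lower_envelope_ge => cd Acd; rewrite lerBlDr.
apply: le_trans (lower_envelope_le t Acd) _; rewrite -addrA lerD2l.
rewrite ge_max addr_ge0 ?le_max ?lexx //=.
have := ler_norm (t - s); have : s - cd.2 <= Num.max 0 (s - cd.2).
  by rewrite le_max lexx orbT.
lra.
Qed.

Lemma continuous_lower_envelope : continuous lower_envelope.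
Proof.
move=> s; apply/cvgrPdist_lt => e e0; near=> t.
have st : `|s - t| < e by near: t; apply: cvgr_dist_lt e0; exact: cvg_id.
apply: le_lt_trans st; rewrite ler_distl; have := lower_envelope_lipschitz s t.
have := lower_envelope_lipschitz t s; rewrite distrC; lra.
Unshelve. all: by end_near. Qed.

End LowerEnvelope.

Definition squash (R : realType) (s : R) : R := s / (1 + `|s|).

(* The factor [squash] makes a merely nondecreasing [h] strictly increasing
   and vanishing at 0, without losing unboundedness. *)
Lemma classKinf_mul_squash (R : realType) (h : R -> R) (D : R) :
  continuous h -> (forall s t, s <= t -> h s <= h t) ->
  (forall t, 0 < t -> 0 < h t) -> (forall s, s - D <= h s) ->
  classKinf (fun s => h s * squash s).
Proof.
move=> h_cont h_le h_gt0 h_ge.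
have squash_cont : continuous (@squash R).
  move=> s; apply: cvgM; first exact: cvg_id.
  apply: cvgV; first by rewrite gt_eqF // ltr_pwDl.
  by apply: cvgD; [exact: cvg_cst | exact: (@norm_continuous _ R^o)].
have squash_ge0 s : 0 <= s -> 0 <= squash s.
  by move=> s0; rewrite divr_ge0 // addr_ge0.
have squash_lt s t : 0 <= s -> s < t -> squash s < squash t.
  move=> s0 st; rewrite /squash !ger0_norm //; last exact: ltW (le_lt_trans s0 st).
  rewrite ltr_pdivlMr; last lra.
  rewrite mulrAC ltr_pdivrMr; [nra | lra].
split; first split.
- apply: continuous_subspaceT => s.
  exact: (continuousM (h_cont s) (squash_cont s)).
- split; first by rewrite /squash normr0 mul0r mulr0.
  move=> s t s0 st; apply: le_lt_trans (_ : h t * squash s < _).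
    by apply: ler_wpM2r; [exact: squash_ge0 | exact/h_le/ltW].
  by rewrite ltr_pM2l ?squash_lt ?h_gt0 //; lra.
move=> M; pose s := 2 * `|M| + `|D| + 2; have sE : s = 2 * `|M| + `|D| + 2 by [].
have := ler_norm D; have := normr_ge0 M; have := ler_norm M; have := normr_ge0 D.
move=> D0 MM M0 DD; exists s; split; first lra.
have squash_half : 1 / 2 <= squash s.
  rewrite /squash ger0_norm; last by lra.
  by rewrite ler_pdivlMr ?ler_pdivrMr; lra.
apply: lt_le_trans (_ : (s - D) * (1 / 2) <= _); first lra.
by apply: ler_pM => //; lra.
Qed.

Lemma classKinf_minorant (R : realType) (I : Type) (S : set I) (e psi : I -> R)
    (D : R) :
  (forall i, S i -> 0 <= e i <= D) -> (forall i, S i -> 0 <= psi i) ->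
  (forall s, 0 < s -> exists2 eps, 0 < eps &
     forall i, S i -> s <= e i -> eps <= psi i) ->
  exists a, classKinf a /\ forall i, S i -> a (e i) <= psi i.
Proof.
move=> e_bnd psi_ge0 psi_pos.
(* The pair [(1, D)] only keeps [A] nonempty. *)
pose A := [set (1, D)] `|` [set (psi i, e i) | i in S].
have A0 : A !=set0 by exists (1, D); left.
have A_ge0 cd : A cd -> 0 <= cd.1 by case=> [-> | [i Si <-]] //=; exact: psi_ge0.
pose h := lower_envelope A.
have max_ge (x : R) : x <= Num.max 0 x by rewrite le_max lexx orbT.
have h_psi i : S i -> h (e i) <= psi i.
  move=> Si; have Ai : A (psi i, e i) by right; exists i.
  by apply: le_trans (lower_envelope_le A_ge0 _ Ai) _; rewrite /= subrr maxxx addr0.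
have h_gt0 t : 0 < t -> 0 < h t.
  move=> t0; have [eps eps0 psi_eps] := psi_pos _ (divr_gt0 t0 (ltr0Sn _ 1)).
  pose m := Num.min 1 (Num.min eps (t / 2)).
  have m0 : 0 < m by rewrite !lt_min ltr01 eps0 divr_gt0.
  apply: lt_le_trans m0 _; apply: lower_envelope_ge => // _ [-> | [i Si <-]] /=.
    by rewrite ge_min lerDl le_max lexx.
  have [ti | ti] := leP (t / 2) (e i).
    rewrite !ge_min (le_trans (psi_eps _ Si ti)) ?orbT // lerDl le_max lexx //.
  rewrite !ge_min; apply/orP; right; apply/orP; right.
  by have := psi_ge0 _ Si; have := max_ge (t - e i); lra.
have h_ge s : s - D <= h s.
  apply: lower_envelope_ge => // _ [-> | [i Si <-]] /=.
    by have := max_ge (s - D); lra.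
  have /andP[_ eD] := e_bnd _ Si; have := psi_ge0 _ Si; have := max_ge (s - e i).
  lra.
exists (fun s => h s * squash s); split.
  apply: classKinf_mul_squash h_ge => //; first exact: continuous_lower_envelope.
  exact: lower_envelope_nondecreasing.
move=> i Si; apply: le_trans (h_psi i Si).
have /andP[e0 _] := e_bnd _ Si.
rewrite ler_piMr ?lower_envelope_ge0 // /squash ?divr_ge0 ?addr_ge0 //.
by rewrite ger0_norm // ler_pdivrMr; lra.
Qed.

Lemma minr1_subadd (R : realType) (a b c : R) : 0 <= a -> 0 <= b -> c <= a + b ->
  Num.min 1 c <= Num.min 1 a + Num.min 1 b.
Proof.
move=> a0 b0 cab.
have m1 : Num.min 1 c <= 1 by rewrite ge_min lexx.
have mc : Num.min 1 c <= c by rewrite ge_min lexx orbT.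
have ma : 0 <= Num.min 1 a by rewrite le_min ler01 a0.
have mb : 0 <= Num.min 1 b by rewrite le_min ler01 b0.
have [a1 | a1] := leP 1 a.
  have : 1 <= Num.min 1 a by rewrite le_min lexx a1.
  lra.
have [b1 | b1] := leP 1 b.
  have : 1 <= Num.min 1 b by rewrite le_min lexx b1.
  lra.
have : a <= Num.min 1 a by rewrite le_min lexx ltW.
have : b <= Num.min 1 b by rewrite le_min lexx ltW.
lra.
Qed.

Section UpperEnvelope.
Variables (R : realType) (A : set (R * R)) (B : R).
Implicit Types (s t : R) (pd : R * R).
Hypothesis A0 : A !=set0.
Hypothesis A_bnd : forall pd, A pd -> 0 <= pd.1 <= B.
Hypothesis A_ge0 : forall pd, A pd -> 0 <= pd.2.
Hypothesis A_unif : forall e, 0 < e -> exists2 del, 0 < del &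
  forall pd, A pd -> pd.2 < del -> pd.1 < e.

(* [pd] is a (value, distance) pair; as [x / 0 = 0], a pair at distance 0
   contributes nothing. *)
Definition upper_envelope (s : R) : R :=
  sup [set pd.1 * Num.min 1 (`|s| / pd.2) | pd in A].

Let term_ge0 pd s : A pd -> 0 <= pd.1 * Num.min 1 (`|s| / pd.2).
Proof.
move=> Apd; have /andP[p0 _] := A_bnd Apd.
by rewrite mulr_ge0 // le_min ler01 divr_ge0 ?A_ge0.
Qed.

Let term_le pd s : A pd -> pd.1 * Num.min 1 (`|s| / pd.2) <= pd.1.
Proof. by move=> Apd; have /andP[p0 _] := A_bnd Apd; rewrite ler_piMr // ge_min lexx. Qed.

Let has_ubound_envelope s :
  has_ubound [set pd.1 * Num.min 1 (`|s| / pd.2) | pd in A].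
Proof.
exists B => _ [pd Apd <-]; apply: le_trans (term_le s Apd) _.
by have /andP[] := A_bnd Apd.
Qed.

Lemma upper_envelope_ge pd s :
  A pd -> pd.1 * Num.min 1 (`|s| / pd.2) <= upper_envelope s.
Proof. by move=> Apd; apply: (ub_le_sup (has_ubound_envelope s)); exists pd. Qed.

Lemma upper_envelope_le x s :
  (forall pd, A pd -> pd.1 * Num.min 1 (`|s| / pd.2) <= x) -> upper_envelope s <= x.
Proof.
move=> Hx; apply: ge_sup => [|_ [pd Apd <-]]; last exact: Hx.
by have [pd Apd] := A0; exists (pd.1 * Num.min 1 (`|s| / pd.2)), pd.
Qed.

Lemma upper_envelope_ge0 s : 0 <= upper_envelope s.
Proof. by have [pd Apd] := A0; apply: le_trans (upper_envelope_ge s Apd); exact: term_ge0. Qed.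

Lemma upper_envelopeN s : upper_envelope (- s) = upper_envelope s.
Proof. by rewrite /upper_envelope; under eq_imagel do rewrite normrN. Qed.

Lemma upper_envelope_subadd s t :
  upper_envelope t <= upper_envelope s + upper_envelope (t - s).
Proof.
apply: upper_envelope_le => pd Apd.
apply: le_trans (lerD (upper_envelope_ge s Apd) (upper_envelope_ge (t - s) Apd)).
have /andP[p0 _] := A_bnd Apd; rewrite -mulrDr ler_wpM2l //.
apply: minr1_subadd; rewrite ?divr_ge0 ?A_ge0 // -mulrDl ler_wpM2r ?invr_ge0 ?A_ge0 //.
by have := ler_normD s (t - s); rewrite addrC subrK addrC.
Qed.

Lemma upper_envelope_nondecreasing s t :
  0 <= s -> s <= t -> upper_envelope s <= upper_envelope t.
Proof.
move=> s0 st; apply: upper_envelope_le => pd Apd.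
apply: le_trans (upper_envelope_ge t Apd); have /andP[p0 _] := A_bnd Apd.
rewrite ler_wpM2l // le_min ge_min lexx /= ge_min; apply/orP; right.
by rewrite ler_wpM2r ?invr_ge0 ?A_ge0 // !ger0_norm // (le_trans s0).
Qed.

Lemma upper_envelope_small e : 0 < e ->
  exists2 del, 0 < del & forall r, `|r| < del -> upper_envelope r < e.
Proof.
move=> e0; have [del del0 Hdel] := A_unif (divr_gt0 e0 (ltr0Sn _ 1)).
have [pd Apd] := A0; have /andP[_ B0] := A_bnd Apd; have {pd Apd}B0 : 0 <= B.
  by have /andP[] := A_bnd Apd; exact: le_trans.
exists (e * del / (2 * (B + 1))); first by rewrite divr_gt0 ?mulr_gt0 //; lra.
move=> r r_lt.
have rB : B * `|r| / del < e / 2.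
  move: r_lt; rewrite ltr_pdivlMr; last by lra.
  by move=> r_lt; rewrite ltr_pdivrMr //; have := normr_ge0 r; nra.
apply: le_lt_trans (_ : e / 2 + B * `|r| / del < e); last by lra.
apply: upper_envelope_le => pd Apd; have /andP[p0 pB] := A_bnd Apd.
have [d_lt | d_ge] := ltP pd.2 del.
  have := Hdel _ Apd d_lt; have := term_le r Apd.
  have : 0 <= B * `|r| / del by rewrite divr_ge0 ?mulr_ge0 // ltW.
  lra.
suff : pd.1 * Num.min 1 (`|r| / pd.2) <= B * `|r| / del.
  have : 0 < e / 2 by rewrite divr_gt0.
  lra.
have d0 : 0 < pd.2 by apply: lt_le_trans del0 d_ge.
apply: (@le_trans _ _ (pd.1 * (`|r| / pd.2))); first by rewrite ler_wpM2l // ge_min lexx orbT.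
rewrite -mulrA ler_pM //; first by rewrite divr_ge0 // ltW.
by rewrite ler_pdivrMr // mulrAC ler_pdivlMr // ler_wpM2l.
Qed.

Lemma continuous_upper_envelope : continuous upper_envelope.
Proof.
move=> s; apply/cvgrPdist_lt => e e0.
have [del del0 Hdel] := upper_envelope_small e0.
near=> t.
have ts : `|t - s| < del.
  by rewrite distrC; near: t; apply: cvgr_dist_lt del0; exact: cvg_id.
apply: le_lt_trans (Hdel _ ts); rewrite ler_distl.
have := upper_envelope_subadd s t; have := upper_envelope_subadd t s.
by rewrite -opprB upper_envelopeN; lra.
Unshelve. all: by end_near. Qed.

Lemma upper_envelope0 : upper_envelope 0 = 0.
Proof.
apply/eqP; rewrite eq_le upper_envelope_ge0 andbT; apply: upper_envelope_le => pd _.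
by rewrite normr0 mul0r (min_r ler01) mulr0.
Qed.

Lemma upper_envelope_dist pd :
  A pd -> (pd.2 = 0 -> pd.1 = 0) -> pd.1 <= upper_envelope pd.2.
Proof.
move=> Apd pd0; apply: le_trans (upper_envelope_ge _ Apd).
have [d0 | d_neq0] := eqVneq pd.2 0; first by rewrite (pd0 d0) mul0r.
by rewrite ger0_norm ?A_ge0 // divff // minxx mulr1.
Qed.

End UpperEnvelope.

Lemma classK_majorant (R : realType) (I : Type) (S : set I) (d phi : I -> R) (B : R) :
  0 <= B -> (forall i, S i -> 0 <= d i) -> (forall i, S i -> 0 <= phi i <= B) ->
  (forall i, S i -> d i = 0 -> phi i = 0) ->
  (forall e, 0 < e -> exists2 del, 0 < del &
     forall i, S i -> d i < del -> phi i < e) ->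
  exists w, classK w /\ forall i, S i -> phi i <= w (d i).
Proof.
move=> B0 d_ge0 phi_bnd phi0 phi_unif.
(* The pair [(0, 0)] only keeps [A] nonempty. *)
pose A := [set (0, 0)] `|` [set (phi i, d i) | i in S].
have A0 : A !=set0 by exists (0, 0); left.
have A_bnd pd : A pd -> 0 <= pd.1 <= B.
  by case=> [-> | [i Si <-]]; [rewrite lexx | exact: phi_bnd].
have A_ge0 pd : A pd -> 0 <= pd.2 by case=> [-> | [i Si <-]] //; exact: d_ge0.
have A_unif e : 0 < e -> exists2 del, 0 < del & forall pd, A pd -> pd.2 < del -> pd.1 < e.
  move=> e0; have [del del0 Hdel] := phi_unif e e0.
  by exists del => // _ [-> | [i Si <-]] //; exact: Hdel.
pose om := upper_envelope A.
(* [om] is only nondecreasing; adding [s] makes it strictly increasing. *)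
exists (fun s => s + om s); split; last first.
  move=> i Si; have Ai : A (phi i, d i) by right; exists i.
  have := upper_envelope_dist A_bnd A_ge0 Ai (phi0 i Si); have := d_ge0 i Si.
  rewrite /om /=; lra.
split.
  have om_cont := continuous_upper_envelope A0 A_bnd A_ge0 A_unif.
  by apply: continuous_subspaceT => s; apply: cvgD; [exact: cvg_id | exact: om_cont].
split; first by rewrite /om add0r (upper_envelope0 A0 A_bnd A_ge0).
by move=> s t s0 st; rewrite ltr_leD // (upper_envelope_nondecreasing A0 A_bnd A_ge0) // ltW.
Qed.

Section CompactComparison.
Variable R : realType.

Lemma continuous_normB (T : topologicalType) (W : normedModType R) (f g : T -> W) :
  continuous f -> continuous g -> continuous (fun t => `|f t - g t|).
Proof. by move=> cf cg t; apply: cvg_norm; apply: cvgB; [exact: cf | exact: cg]. Qed.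

Lemma compact_norm_lt (V : normedModType R) (X : set V) :
  compact X -> exists2 M : R, 0 < M & forall x, X x -> `|x| < M.
Proof. by move=> /compact_bounded/ex_strict_bound_gt0[M M0 XM]; exists M. Qed.

Lemma compact_uniform_small (T : topologicalType) (S : set T) (d phi : T -> R) :
  compact S -> continuous d -> continuous phi ->
  (forall i, S i -> 0 <= d i) -> (forall i, S i -> d i = 0 -> phi i = 0) ->
  forall e, 0 < e -> exists2 del, 0 < del & forall i, S i -> d i < del -> phi i < e.
Proof.
move=> cS cd cphi d_ge0 phi0 e e0.
pose C := S `&` (phi @^-1` [set x | e <= x]).
have [[c0 Cc0] | C0] := pselect (C !=set0); last first.
  exists 1 => // i Si _; rewrite ltNge; apply/negP => ei.
  by apply: C0; exists i.
have cC : compact C.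
  apply: compact_closedI => //; apply: preimage_closed => [x _ |]; first exact: cphi.
  exact: closed_ge.
have [c /set_mem [Sc ec] c_min] :=
  compact_EVT_min (ex_intro _ c0 Cc0) cC (continuous_subspaceT cd).
exists (d c).
  rewrite lt_neqAle d_ge0 // andbT; apply/eqP => /esym/(phi0 _ Sc) phi_c0.
  by move: ec; rewrite /= phi_c0; lra.
move=> i Si di; rewrite ltNge; apply/negP => ei.
by have := c_min i (mem_set (conj Si ei)); lra.
Qed.

Lemma compact_classK_modulus (V W : normedModType R) (X : set V) (G : V -> W) :
  compact X -> continuous G ->
  exists w, classK w /\ forall x x', X x -> X x' -> `|G x - G x'| <= w `|x - x'|.
Proof.
move=> cX cG.
have [M M0 GM] := compact_norm_lt (continuous_compact (continuous_subspaceT cG) cX).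
pose d (xx : V * V) := `|xx.1 - xx.2|.
pose phi (xx : V * V) := `|G xx.1 - G xx.2|.
have cd : continuous d by apply: continuous_normB => xx; [exact: cvg_fst | exact: cvg_snd].
have cphi : continuous phi.
  by apply: continuous_normB => xx; apply: continuous_comp (cG _);
    [exact: cvg_fst | exact: cvg_snd].
have d_ge0 xx : 0 <= d xx by exact: normr_ge0.
have phi0 xx : (X `*` X) xx -> d xx = 0 -> phi xx = 0.
  by move=> _ /normr0_eq0/eqP; rewrite /phi subr_eq0 => /eqP ->; rewrite subrr normr0.
have [w [Kw Hw]] : exists w, classK w /\ forall xx, (X `*` X) xx -> phi xx <= w (d xx).
  apply: (@classK_majorant _ _ _ d phi (M + M)) => //.
  - by rewrite ltW // addr_gt0.
  - move=> [x x'] [Xx Xx']; rewrite /phi normr_ge0 /=.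
    apply: le_trans (ler_normB _ _) _.
    by apply: lerD; apply: ltW; apply: GM; [exists x | exists x'].
  - exact: compact_uniform_small (compact_setX cX cX) cd cphi (fun xx _ => d_ge0 xx) phi0.
by exists w; split => // x x' Xx Xx'; exact: (Hw (x, x')).
Qed.

Lemma classK_mean3_le (b : R -> R) (x y z : R) :
  classK b -> 0 <= x -> 0 <= y -> 0 <= z ->
  b ((x + y + z) / 3) <= b x + b y + b z.
Proof.
move=> Kb x0 y0 z0.
have := classK_ge0 Kb x0; have := classK_ge0 Kb y0; have := classK_ge0 Kb z0.
have m0 : 0 <= (x + y + z) / 3 by rewrite divr_ge0 // !addr_ge0.
have [xm | mx] := leP ((x + y + z) / 3) x.
  by have := classK_le Kb m0 xm; lra.
have [ym | my] := leP ((x + y + z) / 3) y.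
  by have := classK_le Kb m0 ym; lra.
have zm : (x + y + z) / 3 <= z by lra.
by have := classK_le Kb m0 zm; lra.
Qed.

Lemma compact_classKinf_minorant (V1 V2 W1 W2 : normedModType R) (X : set V1) (V : set V2)
    (G : V1 -> W1) (H : V1 -> V2 -> W2) (b : R -> R) :
  compact X -> compact V -> continuous G ->
  continuous (fun xv : V1 * V2 => H xv.1 xv.2) ->
  (forall x x' v, X x -> X x' -> V v -> G x = G x' -> H x v = H x' v -> x = x') ->
  classK b ->
  exists a, classKinf a /\ forall x x' v v', X x -> X x' -> V v -> V v' ->
    a `|x - x'| <= b `|G x - G x'| + b `|H x v - H x' v'| + b `|v - v'|.
Proof.
move=> cX cV cG cH GH_inj Kb.
pose S := (X `*` V) `*` (X `*` V).
pose e (i : (V1 * V2) * (V1 * V2)) := `|i.1.1 - i.2.1|.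
pose nG (i : (V1 * V2) * (V1 * V2)) := `|G i.1.1 - G i.2.1|.
pose nH (i : (V1 * V2) * (V1 * V2)) := `|H i.1.1 i.1.2 - H i.2.1 i.2.2|.
pose nv (i : (V1 * V2) * (V1 * V2)) := `|i.1.2 - i.2.2|.
pose F i := nG i + nH i + nv i.
have c1 : continuous (fun i : (V1 * V2) * (V1 * V2) => i.1) by move=> i; exact: cvg_fst.
have c2 : continuous (fun i : (V1 * V2) * (V1 * V2) => i.2) by move=> i; exact: cvg_snd.
have cx : continuous (fun i : (V1 * V2) * (V1 * V2) => i.1.1).
  by move=> i; apply: continuous_comp; exact: cvg_fst.
have cx' : continuous (fun i : (V1 * V2) * (V1 * V2) => i.2.1).
  by move=> i; apply: continuous_comp; [exact: cvg_snd | exact: cvg_fst].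
have cv : continuous (fun i : (V1 * V2) * (V1 * V2) => i.1.2).
  by move=> i; apply: continuous_comp; [exact: cvg_fst | exact: cvg_snd].
have cv' : continuous (fun i : (V1 * V2) * (V1 * V2) => i.2.2).
  by move=> i; apply: continuous_comp; exact: cvg_snd.
have ce : continuous e by exact: continuous_normB.
have cF : continuous F.
  move=> i; apply: cvgD; first apply: cvgD.
  - apply: continuous_normB => j; [exact: (continuous_comp (cx j) (cG _)) |
      exact: (continuous_comp (cx' j) (cG _))].
  - apply: continuous_normB => j; [exact: (continuous_comp (c1 j) (cH _)) |
      exact: (continuous_comp (c2 j) (cH _))].
  - exact: (continuous_normB cv cv').
have F_ge0 i : 0 <= F i by rewrite /F /nG /nH /nv !addr_ge0.
have e0 i : S i -> F i = 0 -> e i = 0.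
  move: i => [[x v] [x' v']] [[Xx Vv] [Xx' Vv']]; rewrite /F /nG /nH /nv /e /= => F0.
  have := normr_ge0 (G x - G x'); have := normr_ge0 (H x v - H x' v').
  have := normr_ge0 (v - v'); move=> v0 H0 G0.
  have vE : v = v' by apply/subr0_eq/normr0_eq0; lra.
  have GE : G x = G x' by apply/subr0_eq/normr0_eq0; lra.
  have HE : H x v = H x' v by rewrite {2}vE; apply/subr0_eq/normr0_eq0; lra.
  by rewrite (GH_inj x x' v) // subrr normr0.
have [M M0 XM] := compact_norm_lt cX.
have [a [Ka Ha]] : exists a, classKinf a /\ forall i, S i ->
    a (e i) <= b (nG i) + b (nH i) + b (nv i).
  apply: (@classKinf_minorant _ _ _ _ _ (M + M)).
  - move=> [[x v] [x' v']] [[Xx _] [Xx' _]]; rewrite /e normr_ge0 /=.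
    apply: le_trans (ler_normB _ _) _.
    by apply: lerD; apply: ltW; apply: XM.
  - by move=> i _; rewrite !addr_ge0 ?(classK_ge0 Kb) ?normr_ge0.
  move=> s s0.
  have [eps eps0 Heps] := compact_uniform_small (compact_setX (compact_setX cX cV)
    (compact_setX cX cV)) cF ce (fun i _ => F_ge0 i) e0 s0.
  have eps3 : 0 < eps / 3 by rewrite divr_gt0.
  exists (b (eps / 3)); first by rewrite -Kb.2.1; exact: Kb.2.2.
  move=> i Si si; apply: le_trans (classK_mean3_le Kb _ _ _); rewrite ?normr_ge0 //.
  apply: classK_le (ltW eps3) _ => //.
  by rewrite ler_pM2r // leNgt; apply/negP => /(Heps _ Si); lra.
by exists a; split => // x x' v v' Xx Xx' Vv Vv'; apply: (Ha ((x, v), (x', v'))).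
Qed.

End CompactComparison.

Lemma derive0_cst (R : realType) (V : normedModType R) (m1 m2 : nat)
    (F : V -> 'M[R]_(m1, m2)) :
  (forall w, differentiable F w) -> (forall w dw, 'D_dw F w = 0) ->
  forall w, F w = F 0.
Proof.
move=> dF DF w.
pose g (t : R) := t *: w.
have dg t : differentiable g t by exact: ex_diff.
have dFg t : differentiable (F \o g) t by apply: differentiable_comp; [exact: dg | exact: dF].
have D_Fg t : 'D_1 (F \o g) t = 0.
  rewrite (deriveE _ (dFg t)) (diff_comp (dg t) (dF _)).
  have -> : ('d g t : R -> _) = ( *:%R ^~ w) by apply: diff_val.
  by rewrite /= scale1r -deriveE ?DF.
apply/matrixP => i j.
have := @is_derive_0_is_cst R (fun t => (F \o g) t i j) 1 0.
rewrite /g /= scale1r scale0r; apply => t.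
have dv : derivable (F \o g) t 1 by exact: diff_derivable.
split; first by move: dv => /derivable_mxP; apply.
by have := derive_mx dv; rewrite D_Fg => /matrixP /(_ i j); rewrite !mxE.
Qed.

Section ReducedOrderSystem.
Variables (R : realType) (n m q r p nb ns : nat).
Variables (X : set 'rV[R]_n) (U : set 'rV[R]_m) (V : set 'rV[R]_r) (Y : set 'rV[R]_p).
Variables (f : 'rV[R]_n -> 'rV[R]_m -> 'rV[R]_q -> 'rV[R]_n)
  (h : 'rV[R]_n -> 'rV[R]_r -> 'rV[R]_p)
  (T : 'rV[R]_n -> 'rV[R]_(nb + ns)) (Tinv : 'rV[R]_(nb + ns) -> 'rV[R]_n)
  (psi : 'rV[R]_p -> 'rV[R]_ns -> 'rV[R]_r -> 'rV[R]_nb).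
Hypothesis TK : cancel T Tinv.
Hypothesis psi_h_T : forall zs zb v y, y = h_T h Tinv zs zb v -> zb = psi y zs v.

Lemma lsubmx_T_psi x v : lsubmx (T x) = psi (h x v) (rsubmx (T x)) v.
Proof. by apply: psi_h_T; rewrite /h_T hsubmxK TK. Qed.

Lemma rsubmx_T_output_inj x x' v :
  rsubmx (T x) = rsubmx (T x') -> h x v = h x' v -> x = x'.
Proof.
move=> Tx hx; rewrite -(TK x) -(TK x') -(hsubmxK (T x)) -(hsubmxK (T x')).
by rewrite (lsubmx_T_psi x v) (lsubmx_T_psi x' v) Tx hx.
Qed.

Hypothesis f_sharpE : forall zs zb u w,
  f_sharp f T Tinv zs zb u w = f_sharp f T Tinv zs zb u 0.

(* The measured output doubles as the fictitious input gamma. *)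
Lemma orig_sol_red_sol x u w v y : orig_sol X U V Y f h x u w v y ->
  red_sol X U V Y f h T Tinv psi (fun k => rsubmx (T (x k))) y u v y.
Proof.
move=> sol k; have [Xx [Uu [Vv [Yy [xS yE]]]]] := sol k.
split; first by exists (x k).
do 4!split => //; split.
  by rewrite /f_hat -(f_sharpE _ _ _ (w k)) /f_sharp yE -lsubmx_T_psi hsubmxK TK xS.
by rewrite /h_hat /h_T yE -lsubmx_T_psi hsubmxK TK.
Qed.

Variables (a b om : R -> R) (b0 bv by_ bg : R -> R -> R).
Hypotheses (Kb : classK b) (KLb0 : classKL b0).
Hypotheses (KLbv : classKL bv) (KLby : classKL by_) (KLbg : classKL bg).
Hypothesis red_bound : forall zs g u v y zst gt vt yt,
  red_sol X U V Y f h T Tinv psi zs g u v y ->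
  red_sol X U V Y f h T Tinv psi zst gt u vt yt ->
  forall k : nat,
    b `|zs k - zst k| <=
      \sum_(1 <= i < k.+1) bv `|v (k - i)%N - vt (k - i)%N| i%:R +
      \sum_(1 <= i < k.+1)
         (by_ `|y (k - i)%N - yt (k - i)%N| i%:R +
          bg `|g (k - i)%N - gt (k - i)%N| i%:R) +
      b0 `|zs 0%N - zst 0%N| k%:R.
Hypothesis a_le : forall x x' v v', X x -> X x' -> V v -> V v' ->
  a `|x - x'| <= b `|rsubmx (T x) - rsubmx (T x')| + b `|h x v - h x' v'| + b `|v - v'|.
Hypothesis om_ge : forall x x', X x -> X x' ->
  `|rsubmx (T x) - rsubmx (T x')| <= om `|x - x'|.

Lemma orig_sol_estimate x u w v y xt wt vt yt :
  orig_sol X U V Y f h x u w v y -> orig_sol X U V Y f h xt u wt vt yt ->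
  forall k : nat,
    a `|x k - xt k| <=
      b0 (om `|x 0%N - xt 0%N|) k%:R +
      \sum_(0 <= i < k.+1)
         (bv `|v (k - i)%N - vt (k - i)%N| i%:R +
          b `|v (k - i)%N - vt (k - i)%N| * decay i%:R +
          (by_ `|y (k - i)%N - yt (k - i)%N| i%:R +
           bg `|y (k - i)%N - yt (k - i)%N| i%:R +
           b `|y (k - i)%N - yt (k - i)%N| * decay i%:R)).
Proof.
move=> sol sol' k.
have := red_bound (orig_sol_red_sol sol) (orig_sol_red_sol sol') k.
rewrite big_split /= => red_k.
have [Xk [_ [Vk [_ [_ yk]]]]] := sol k; have [Xk' [_ [Vk' [_ [_ yk']]]]] := sol' k.
have := a_le Xk Xk' Vk Vk'; rewrite -yk -yk' => a_k.
have [X0 _] := sol 0%N; have [X0' _] := sol' 0%N.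
have b0_le : b0 `|rsubmx (T (x 0%N)) - rsubmx (T (xt 0%N))| k%:R <=
    b0 (om `|x 0%N - xt 0%N|) k%:R.
  exact: classK_le (KLb0.1 _ (ler0n _ _)) (normr_ge0 _) (om_ge X0 X0').
have decay_sum_ge0 (W : normedModType R) (z z' : nat -> W) :
    0 <= \sum_(1 <= i < k.+1) b `|z (k - i)%N - z' (k - i)%N| * decay i%:R.
  by apply: sumr_ge0 => i _; rewrite mulr_ge0 ?(classK_ge0 Kb) // ltW ?decay_gt0.
rewrite big_ltn // subn0 decay0 !mulr1 !big_split /=.
have := decay_sum_ge0 _ v vt; have := decay_sum_ge0 _ y yt.
have := classKL_ge0 KLbv (normr_ge0 (v k - vt k)) (lexx 0).
have := classKL_ge0 KLby (normr_ge0 (y k - yt k)) (lexx 0).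
have := classKL_ge0 KLbg (normr_ge0 (y k - yt k)) (lexx 0).
lra.
Qed.

End ReducedOrderSystem.

Lemma f_sharp_w0 (R : realType) (n m q nb ns : nat)
    (f : 'rV[R]_n -> 'rV[R]_m -> 'rV[R]_q -> 'rV[R]_n)
    (T : 'rV[R]_n -> 'rV[R]_(nb + ns)) (Tinv : 'rV[R]_(nb + ns) -> 'rV[R]_n) :
  (forall xuw, differentiable (fun xuw => f xuw.1.1 xuw.1.2 xuw.2) xuw) ->
  (forall x, differentiable T x) ->
  (forall zs zb u w dw, 'D_dw (fun w' => f_sharp f T Tinv zs zb u w') w = 0) ->
  forall zs zb u w, f_sharp f T Tinv zs zb u w = f_sharp f T Tinv zs zb u 0.
Proof.
move=> df dT Dw zs zb u; apply: derive0_cst; last exact: Dw.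
move=> w; apply: differentiable_comp; last exact: differentiable_rsubmx.
apply: (differentiable_comp (f := fun w' => f (Tinv (row_mx zb zs)) u w')); last exact: dT.
by apply: (differentiable_comp (f := fun w' : 'rV[R]_q => (Tinv (row_mx zb zs), u, w'))
  (g := fun xuw : 'rV[R]_n * 'rV[R]_m * 'rV[R]_q => f xuw.1.1 xuw.1.2 xuw.2)).
Qed.

Unset Implicit Arguments.
Set Strict Implicit.

Theorem lemma3 (R : realType) (n m q r p nb ns : nat)
  (X : set 'rV[R]_n) (U : set 'rV[R]_m) (V : set 'rV[R]_r) (Y : set 'rV[R]_p)
  (f : 'rV[R]_n -> 'rV[R]_m -> 'rV[R]_q -> 'rV[R]_n)
  (h : 'rV[R]_n -> 'rV[R]_r -> 'rV[R]_p)
  (T : 'rV[R]_n -> 'rV[R]_(nb + ns)) (Tinv : 'rV[R]_(nb + ns) -> 'rV[R]_n)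
  (psi : 'rV[R]_p -> 'rV[R]_ns -> 'rV[R]_r -> 'rV[R]_nb) :
  compact X -> compact V -> compact Y ->
  C1 (fun xuw : 'rV[R]_n * 'rV[R]_m * 'rV[R]_q => f xuw.1.1 xuw.1.2 xuw.2) ->
  C1 (fun xv : 'rV[R]_n * 'rV[R]_r => h xv.1 xv.2) ->
  diffeo T Tinv ->
  C1 (fun ysv : 'rV[R]_p * 'rV[R]_ns * 'rV[R]_r => psi ysv.1.1 ysv.1.2 ysv.2) ->
  (forall (zs : 'rV[R]_ns) (zb : 'rV[R]_nb) (v : 'rV[R]_r) (y : 'rV[R]_p),
      y = h_T h Tinv zs zb v -> zb = psi y zs v) ->
  (forall (zs : 'rV[R]_ns) (zb : 'rV[R]_nb) (u : 'rV[R]_m) (w dw : 'rV[R]_q),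
      'D_dw (fun w' => f_sharp f T Tinv zs zb u w') w = 0) ->
  reduced_detectable X U V Y f h T Tinv psi ->
  strongly_nl_detectable X U V Y f h.
Proof.
move=> cX cV _ [df _] [dh _] [TK [_ [[dT _] _]]] _ psi_h_T Dw.
move=> [b [b0 [bv [by_ [bg [Kb [KLb0 [Sbv [Sby [Sbg red_bound]]]]]]]]]].
have cG : continuous (fun x => rsubmx (T x)).
  by move=> x; apply: continuous_comp; [exact: differentiable_continuous |
    exact: continuous_rsubmx].
have ch : continuous (fun xv : 'rV[R]_n * 'rV[R]_r => h xv.1 xv.2).
  by move=> xv; exact: differentiable_continuous.
have [a [Ka a_le]] := compact_classKinf_minorant (H := h) cX cV cG ch
  (fun x x' v _ _ _ => rsubmx_T_output_inj TK psi_h_T (v := v)) Kb.1.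
have [om [Kom om_ge]] := compact_classK_modulus cX cG.
exists a, (fun s t => b0 (om s) t), (fun s t => bv s t + b s * decay t),
  (fun s t => by_ s t + bg s t + b s * decay t).
do 2!split => //; first exact: classKL_comp.
split; first exact: summableKL_add_decay Sbv Kb.1.
split; first exact: summableKL_add_decay (summableKL_add Sby Sbg) Kb.1.
move=> x u w v y xt wt vt yt.
exact: (orig_sol_estimate TK psi_h_T (f_sharp_w0 df dT Dw) Kb.1 KLb0 Sbv.1 Sby.1 Sbg.1
  red_bound a_le om_ge).
Qed.
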